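(* Let $(H,K,I)$ be a split graph on $7$ distinct vertices with $I=\{a,b,u,v\}$ and $K=\{x,y,z\}$. Suppose the induced subgraphs $\langle a,x,y,u\rangle_H$ and $\langle b,x,z,v\rangle_H$ are both isomorphic to $P_4$. Then: (1) $u$ and $z$ are joined by a path $P$ in $A_4(H)$ with $V(P)\setminus\{z\}\subseteq I$; (2) $\Phi(H)$ is connected.
   Context: All graphs are finite and simple. A split graph is a graph $S$ whose vertex set is a disjoint union $V(S)=K\,\dot\cup\,I$ with $K$ a clique and $I$ an independent set; $(K,I)$ is called a bipartition of $S$, and $(S,K,I)$ denotes $S$ together with this fixed bipartition. $\langle W\rangle_G$ denotes the subgraph of $G$ induced by $W$. A 2-switch in a graph $G$ is performed on four distinct vertices $a,b,c,d$ with $ab,cd\in E(G)$ and $ac,bd\notin E(G)$: it deletes $ab,cd$ and adds $ac,bd$; $a,b,c,d$ are said to participate in it. $A_4(G)$ is the graph with vertex set $V(G)$ in which distinct $u,v$ are adjacent iff some 2-switch on $G$ has both $u$ and $v$ among its participating vertices. For a split graph $(S,K,I)$ and distinct $u,v\in I$, $\sigma_{uv}(S)$ is the number of induced subgraphs of $S$ isomorphic to $P_4$ containing both $u$ and $v$. The factor graph $\Phi(S)$ is the loopless multigraph with vertex set $I$ having exactly $\sigma_{uv}(S)$ parallel edges between $u$ and $v$. Graph notions (connected, complete, clique, etc.) applied to $\Phi(S)$ refer to its underlying simple graph, in which $u\sim v$ iff $\sigma_{uv}(S)\ge1$. *)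

From mathcomp Require Import all_boot.
Set Implicit Arguments.
Unset Strict Implicit.
Unset Printing Implicit Defensive.

Section Graphs.
Variable T : finType.

Definition simple_graph (e : rel T) : Prop := symmetric e /\ irreflexive e.

Definition split_bipartition (e : rel T) (K I : {set T}) : Prop :=
  [/\ [disjoint K & I], K :|: I = setT,
      {in K &, forall p q, p != q -> e p q} &
      {in I &, forall p q, ~~ e p q}].

Definition P4adj (i j : 'I_4) : bool := (i.+1 == j :> nat) || (j.+1 == i :> nat).

Definition induced_P4 (e : rel T) (W : {set T}) : bool :=
  [exists f : {ffun 'I_4 -> T},
    [&& injectiveb f, [set f i | i : 'I_4] == W &
        [forall i, forall j, e (f i) (f j) == P4adj i j]]].

Definition two_switch (e : rel T) (a b c d : T) : bool :=
  [&& uniq [:: a; b; c; d], e a b, e c d, ~~ e a c & ~~ e b d].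

Definition A4adj (e : rel T) : rel T := fun p q =>
  (p != q) && [exists a, exists b, exists c, exists d,
    [&& two_switch e a b c d, p \in [:: a; b; c; d] & q \in [:: a; b; c; d]]].

Definition sigma (e : rel T) (p q : T) : nat :=
  #|[set W : {set T} | [&& induced_P4 e W, p \in W & q \in W]]|.

(* underlying simple graph of the factor graph Phi on vertex set I *)
Definition Phiadj (e : rel T) (I : {set T}) : rel T := fun p q =>
  [&& p \in I, q \in I, p != q & 0 < sigma e p q].

Definition connected_on (I : {set T}) (r : rel T) : Prop :=
  forall p q, p \in I -> q \in I ->
    exists s : seq T, [/\ path r p s, last p s = q & all (mem I) s].
End Graphs.

From mathcomp Require Import all_boot.
Set Implicit Arguments. Unset Strict Implicit.

(* Every induced P4 w0-w1-w2-w3 is itself the 2-switch (w0, w1, w2, w3), so the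
   two given P4s make u ~ a and b ~ z ~ v in A4(H), and a ~ u, b ~ v in Phi(H).
   Across the two P4s: a and u see different ends of the edge xy, b and v see
   different ends of xz, and a short case analysis shows that some a-or-u and
   some b-or-v have incomparable neighbourhoods in K.  Private neighbours
   k1 of p and k2 of q then give a third induced P4 p-k1-k2-q, which links
   {a, u} to {b, v} in both graphs. *)

Section InducedP4.
Variables (T : finType) (e : rel T).

Lemma two_switch_A4adj a b c d p q : two_switch e a b c d ->
  p \in [:: a; b; c; d] -> q \in [:: a; b; c; d] -> p != q -> A4adj e p q.
Proof.
move=> sw p_abcd q_abcd neq_pq; rewrite /A4adj neq_pq.
by apply/existsP; exists a; apply/existsP; exists b; apply/existsP; exists c;
   apply/existsP; exists d; rewrite sw p_abcd q_abcd.
Qed.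

Lemma induced_P4_A4adj (W : {set T}) p q :
  induced_P4 e W -> p \in W -> q \in W -> p != q -> A4adj e p q.
Proof.
case/existsP=> f /and3P[/injectiveP f_inj /eqP <- /forallP f_adj].
have adj i j : e (f i) (f j) = P4adj i j by apply/eqP; move/forallP: (f_adj i).
pose o (n : nat) (lt_n4 : n < 4) : 'I_4 := Ordinal lt_n4.
have sw : two_switch e (f (o 0 isT)) (f (o 1 isT)) (f (o 2 isT)) (f (o 3 isT)).
  by rewrite /two_switch !adj /= !inE !(inj_eq f_inj).
have in_sw k : f k \in [:: f (o 0 isT); f (o 1 isT); f (o 2 isT); f (o 3 isT)].
  by rewrite !inE !(inj_eq f_inj); case: k => -[|[|[|[]]]].
by move=> /imsetP[i _ ->] /imsetP[j _ ->]; apply: (two_switch_A4adj sw).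
Qed.

Lemma induced_P4_Phiadj (I W : {set T}) p q :
  induced_P4 e W -> p \in W -> q \in W -> p \in I -> q \in I -> p != q ->
  Phiadj e I p q.
Proof.
move=> P4W pW qW pI qI neq_pq; rewrite /Phiadj pI qI neq_pq /=.
by apply/card_gt0P; exists W; rewrite inE P4W pW qW.
Qed.

Lemma sigmaC p q : sigma e p q = sigma e q p.
Proof. by rewrite /sigma; apply: eq_card => W; rewrite !inE [(p \in W) && _]andbC. Qed.

Lemma Phiadj_sym (I : {set T}) : symmetric (Phiadj e I).
Proof. by move=> p q; rewrite /Phiadj sigmaC eq_sym andbCA. Qed.

Hypotheses (e_sym : symmetric e) (e_irr : irreflexive e).

Lemma induced_P4_path p q r s :
  e p q -> e q r -> e r s -> ~~ e p r -> ~~ e q s -> ~~ e p s ->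
  induced_P4 e [set p; q; r; s].
Proof.
move=> pq qr rs npr nqs nps.
have uniq_pqrs : uniq [:: p; q; r; s].
  rewrite /= !inE !negb_or -!andbA andbT; do !(apply/andP; split).
  - by apply: contraTneq pq => ->; rewrite e_irr.
  - by apply: contraNneq nps => ->.
  - by apply: contraNneq npr => ->; rewrite e_sym.
  - by apply: contraTneq qr => ->; rewrite e_irr.
  - by apply: contraNneq nps => <-.
  - by apply: contraTneq rs => ->; rewrite e_irr.
apply/existsP; exists [ffun i : 'I_4 => nth p [:: p; q; r; s] i].
apply/and3P; split.
- apply/injectiveP => i j; rewrite !ffunE => /eqP.
  by rewrite nth_uniq ?(ltn_ord i) ?(ltn_ord j) // => /eqP/val_inj.
- apply/eqP/setP => w; have -> : (w \in [set p; q; r; s]) = (w \in [:: p; q; r; s]).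
    by rewrite !inE -!orbA.
  apply/imsetP/idP => [[i _ ->]|w_in]; first by rewrite ffunE mem_nth.
  have lt_w4 : index w [:: p; q; r; s] < 4 by rewrite index_mem.
  by exists (Ordinal lt_w4); rewrite ?ffunE ?nth_index.
- apply/forallP => i; apply/forallP => j; rewrite !ffunE.
  by case: i => -[|[|[|[]]]] //= ?; case: j => -[|[|[|[]]]] //= ?;
     rewrite /P4adj /= ?e_irr ?(e_sym q p) ?(e_sym r q) ?(e_sym s r)
       ?(e_sym r p) ?(e_sym s q) ?(e_sym s p) ?pq ?qr ?rs
       ?(negbTE npr) ?(negbTE nqs) ?(negbTE nps).
Qed.

Lemma induced_P4_ends p k1 k2 q :
  e k1 k2 -> ~~ e p q -> induced_P4 e [set p; k1; k2; q] ->
  (e p k1 && ~~ e p k2 && e q k2 && ~~ e q k1) ||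
  (e p k2 && ~~ e p k1 && e q k1 && ~~ e q k2).
Proof.
move=> k12 npq /existsP[f /and3P[_ /eqP f_img /forallP f_adj]].
have adj i j : e (f i) (f j) = P4adj i j by apply/eqP; move/forallP: (f_adj i).
have f_in i : [\/ f i = p, f i = k1, f i = k2 | f i = q].
  have : f i \in [set p; k1; k2; q] by rewrite -f_img imset_f.
  by rewrite !inE -!orbA => /or4P[]/eqP; constructor.
pose o (n : nat) (lt_n4 : n < 4) : 'I_4 := Ordinal lt_n4.
move: (adj (o 0 isT) (o 1 isT)) (adj (o 1 isT) (o 2 isT)) (adj (o 2 isT) (o 3 isT)).
move: (adj (o 0 isT) (o 2 isT)) (adj (o 1 isT) (o 3 isT)) (adj (o 0 isT) (o 3 isT)).
move: (f_in (o 0 isT)) (f_in (o 1 isT)) (f_in (o 2 isT)) (f_in (o 3 isT)).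
do 4!case=> ->;
 rewrite ?e_irr ?(e_sym k1 p) ?(e_sym k2 p) ?(e_sym k1 q) ?(e_sym k2 q)
   ?(e_sym k2 k1) ?(e_sym q p) ?k12 ?(negbTE npq);
 by case: (e p k1); case: (e p k2); case: (e q k1); case: (e q k2).
Qed.
End InducedP4.

Definition incomparable_nbrs (T : eqType) (e : rel T) (K : seq T) p q :=
  has (fun k => e p k && ~~ e q k) K && has (fun k => e q k && ~~ e p k) K.

Section IncomparableNbrs.
Variables (T : finType) (e : rel T).

Lemma incomparable_nbrs_neq K p q : incomparable_nbrs e K p q -> p != q.
Proof. by case/andP=> /hasP[k _ /andP[pk nqk]] _; apply: contraNneq nqk => <-. Qed.

(* Let p in {a, u} and q in {b, v} be the vertices seeing x, and p', q' the
   others.  If the pairs (p', q) and (p, q') are both comparable, then y is a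
   private neighbour of p' and z one of q' in the pair (p', q'). *)
Lemma incomparable_nbrs_cross a u b v x y z :
  (e a x && ~~ e a y && e u y && ~~ e u x) ||
  (e a y && ~~ e a x && e u x && ~~ e u y) ->
  (e b x && ~~ e b z && e v z && ~~ e v x) ||
  (e b z && ~~ e b x && e v x && ~~ e v z) ->
  exists2 p, p \in [:: a; u] &
    exists2 q, q \in [:: b; v] & incomparable_nbrs e [:: x; y; z] p q.
Proof.
move=> au bv; suff /or4P[] : [|| incomparable_nbrs e [:: x; y; z] a b,
    incomparable_nbrs e [:: x; y; z] a v, incomparable_nbrs e [:: x; y; z] u b
  | incomparable_nbrs e [:: x; y; z] u v].
- by exists a; rewrite ?inE ?eqxx //; exists b; rewrite ?inE ?eqxx.
- by exists a; rewrite ?inE ?eqxx //; exists v; rewrite ?inE ?eqxx ?orbT.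
- by exists u; rewrite ?inE ?eqxx ?orbT //; exists b; rewrite ?inE ?eqxx.
- by exists u; rewrite ?inE ?eqxx ?orbT //; exists v; rewrite ?inE ?eqxx ?orbT.
move: au bv; rewrite /incomparable_nbrs /=.
move: (e a x) (e a y) (e a z) (e u x) (e u y) (e u z).
move: (e b x) (e b y) (e b z) (e v x) (e v y) (e v z).
by do 12!case=> //.
Qed.

Hypotheses (e_sym : symmetric e) (e_irr : irreflexive e).

Lemma incomparable_nbrs_P4 K p q :
  {in K &, forall k k', k != k' -> e k k'} -> ~~ e p q ->
  incomparable_nbrs e K p q -> exists k1 k2, induced_P4 e [set p; k1; k2; q].
Proof.
move=> K_clique npq /andP[/hasP[k1 k1K /andP[pk1 nqk1]] /hasP[k2 k2K /andP[qk2 npk2]]].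
have nk12 : k1 != k2 by apply: contraNneq npk2 => <-.
exists k1, k2; apply: induced_P4_path; rewrite // ?(e_sym k2 q) ?(e_sym k1 q) //.
exact: K_clique.
Qed.
End IncomparableNbrs.

Section Connect.
Variables (T : finType) (r : rel T).

Lemma connect_bridge a u p q :
  r u a -> p \in [:: a; u] -> r p q -> connect r u q.
Proof.
move=> ua; rewrite !inE => /orP[]/eqP-> pq; last exact: connect1.
exact: connect_trans (connect1 ua) (connect1 pq).
Qed.

Lemma connect_restrict_path (P : pred T) x y :
  P x -> connect [rel p q | r p q && P q] x y ->
  exists s, [/\ path r x s, last x s = y, uniq (x :: s) & all P (x :: s)].
Proof.
move=> Px /connectP[s rs ->].
have /allP Ps : all P s.
  by elim: s x {Px} rs => //= w s IHs x /andP[/andP[_ ->] /IHs].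
case: (shortenP rs) => s' rs' uniq_s' sub_s'.
exists s'; split=> //; first by apply: sub_path rs' => p q /andP[].
by rewrite /= Px; apply/allP => w /sub_s'/Ps.
Qed.

Lemma connected_on_connect (I : {set T}) :
  (forall p q, r p q -> q \in I) -> {in I &, forall p q, connect r p q} ->
  connected_on I r.
Proof.
move=> rI I_conn p q pI qI.
have r_restrict : r =2 [rel p' q' | r p' q' && (q' \in I)].
  by move=> p' q' /=; case rpq: (r p' q'); rewrite ?(rI _ _ rpq).
have := I_conn p q pI qI; rewrite (eq_connect r_restrict).
by case/(connect_restrict_path pI) => s [rs <- _ /andP[_ sI]]; exists s.
Qed.

Lemma connect_linked_pairs a u b v p q :
  connect_sym r -> r u a -> r b v -> p \in [:: a; u] -> q \in [:: b; v] ->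
  r p q -> {in [set a; b; u; v] &, forall w w', connect r w w'}.
Proof.
move=> r_sym ua bv pau qbv pq.
suff u_to w : w \in [set a; b; u; v] -> connect r u w.
  by move=> w w' /u_to uw /u_to; apply: connect_trans; rewrite r_sym.
have [ub uv] : connect r u b /\ connect r u v.
  have uq := connect_bridge ua pau pq.
  move: qbv uq; rewrite !inE => /orP[]/eqP-> uq.
    by split=> //; apply: connect_trans uq (connect1 bv).
  by split=> //; apply: connect_trans uq _; rewrite r_sym connect1.
by rewrite !inE -!orbA => /or4P[]/eqP->; [exact: connect1 | | exact: connect0 |].
Qed.
End Connect.

Section Lemma2p1.
Variables (T : finType) (e : rel T) (a b u v x y z : T).
Hypothesis e_simple : simple_graph e.
Hypothesis vertices_uniq : uniq [:: a; b; u; v; x; y; z].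
Hypothesis KI_split : split_bipartition e [set x; y; z] [set a; b; u; v].
Hypotheses (P4_axyu : induced_P4 e [set a; x; y; u])
           (P4_bxzv : induced_P4 e [set b; x; z; v]).

Local Notation I := [set a; b; u; v].

Let vertices_neq : [/\ a != u, b != v, b != z & v != z].
Proof.
by split; apply: contraTneq vertices_uniq => ->; rewrite /= !inE eqxx ?orbT ?andbF.
Qed.

Let mem_I w : (w \in I) = (w \in [:: a; u]) || (w \in [:: b; v]).
Proof. by rewrite !inE -!orbA [(w == b) || _]orbCA. Qed.

Lemma cross_induced_P4 : exists p q, [/\ p \in [:: a; u], q \in [:: b; v], p != q &
  exists k1 k2, induced_P4 e [set p; k1; k2; q]].
Proof.
have [[e_sym e_irr] [_ _ K_clique I_indep]] := (e_simple, KI_split).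
have [aI uI bI vI] : [/\ a \in I, u \in I, b \in I & v \in I].
  by rewrite !mem_I !inE !eqxx ?orbT.
have memK w : (w \in [set x; y; z]) = (w \in [:: x; y; z]) by rewrite !inE -orbA.
have K_clique_seq : {in [:: x; y; z] &, forall k k', k != k' -> e k k'}.
  by move=> k k'; rewrite -!memK; apply: K_clique.
have [xy xz] : e x y /\ e x z.
  by split; apply: K_clique_seq; rewrite ?inE ?eqxx ?orbT //;
     apply: contraTneq vertices_uniq => ->; rewrite /= !inE eqxx ?orbT ?andbF.
have [p pau [q qbv pq_inc]] := incomparable_nbrs_cross
  (induced_P4_ends e_sym e_irr xy (I_indep a u aI uI) P4_axyu)
  (induced_P4_ends e_sym e_irr xz (I_indep b v bI vI) P4_bxzv).
have [pI qI] : p \in I /\ q \in I by rewrite !mem_I pau qbv ?orbT.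
have P4_pq := incomparable_nbrs_P4 e_sym e_irr K_clique_seq (I_indep p q pI qI) pq_inc.
by exists p, q; split; rewrite ?(incomparable_nbrs_neq pq_inc).
Qed.

Lemma A4adj_path_u_z : exists s : seq T,
  [/\ path (A4adj e) u s, last u s = z, uniq (u :: s) &
      all (fun w => (w == z) || (w \in I)) (u :: s)].
Proof.
have [nau _ nbz nvz] := vertices_neq.
have [p [q [pau qbv npq [k1 [k2 P4_pq]]]]] := cross_induced_P4.
have A4_z w : w \in [:: b; v] -> A4adj e w z.
  by rewrite !inE => /orP[]/eqP->; rewrite (induced_P4_A4adj P4_bxzv) ?inE ?eqxx ?orbT.
pose A4I := [rel w w' | A4adj e w w' && ((w' == z) || (w' \in I))].
have uq : connect A4I u q.
  apply: connect_bridge pau _; rewrite /= !mem_I ?qbv ?inE ?eqxx ?orbT ?andbT.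
    by rewrite (induced_P4_A4adj P4_axyu) ?inE ?eqxx ?orbT // eq_sym.
  by rewrite (induced_P4_A4adj P4_pq) ?inE ?eqxx ?orbT.
have uz : connect A4I u z.
  by apply: connect_trans uq (connect1 _); rewrite /= A4_z ?eqxx.
by apply: connect_restrict_path uz; rewrite mem_I !inE eqxx ?orbT.
Qed.

Lemma Phi_connected : connected_on I (Phiadj e I).
Proof.
have [nau nbv _ _] := vertices_neq.
have [p [q [pau qbv npq [k1 [k2 P4_pq]]]]] := cross_induced_P4.
have [pI qI] : p \in I /\ q \in I by rewrite !mem_I pau qbv ?orbT.
apply: (connected_on_connect (r := Phiadj e I)) => [p' q' /and4P[] //|].
apply: (connect_linked_pairs (sym_connect_sym (Phiadj_sym e I)) _ _ pau qbv).
- by rewrite (induced_P4_Phiadj P4_axyu) ?inE ?eqxx ?orbT // eq_sym.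
- by rewrite (induced_P4_Phiadj P4_bxzv) ?inE ?eqxx ?orbT.
- by rewrite (induced_P4_Phiadj P4_pq) // !inE eqxx ?orbT.
Qed.
End Lemma2p1.

Theorem lemma2p1 (T : finType) (e : rel T) (a b u v x y z : T) :
  simple_graph e ->
  uniq [:: a; b; u; v; x; y; z] ->
  split_bipartition e [set x; y; z] [set a; b; u; v] ->
  induced_P4 e [set a; x; y; u] ->
  induced_P4 e [set b; x; z; v] ->
  (exists s : seq T,
     [/\ path (A4adj e) u s, last u s = z, uniq (u :: s) &
         all (fun w => (w == z) || (w \in [set a; b; u; v])) (u :: s)])
  /\ connected_on [set a; b; u; v] (Phiadj e [set a; b; u; v]).
Proof.
move=> e_simple vertices_uniq KI_split P4_axyu P4_bxzv.
split; [exact: (A4adj_path_u_z e_simple vertices_uniq KI_split P4_axyu P4_bxzv)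
      | exact: (Phi_connected e_simple vertices_uniq KI_split P4_axyu P4_bxzv)].
Qed.
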